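(* Let $p\in(0,1)$ and let $\beta:\mathbb{N}\to\mathbb{R}$ be a function such that $|\beta(n)|=O(\sqrt{n})$ and $\lim_{n\to\infty}|\beta(n)|=\infty$. Then for all sufficiently large $n$, $$\frac{B^{\lfloor np\rfloor}_n(p)}{B^{\lfloor np\rfloor-\lfloor\beta(n)\rfloor}_n(p)}\leq \exp\!\Big(\frac{1}{p(1-p)}\cdot\frac{\lfloor\beta(n)\rfloor^2}{n}\Big).$$
   Context: For $p\in(0,1)$, $n\in\mathbb{N}$ and $i\in\mathbb{Z}$, $B_n^i(p)=\binom{n}{i}p^i(1-p)^{n-i}$ if $0\leq i\leq n$ and $B_n^i(p)=0$ otherwise. For $f,g:\mathbb{N}\to\mathbb{R}^+_0$, $f(n)=O(g(n))$ means there is $C>0$ with $f(n)\leq Cg(n)$ for all sufficiently large $n$. *)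

From HB Require Import structures.
From mathcomp Require Import all_boot all_order all_algebra.
From mathcomp Require Import all_classical all_reals all_analysis.
Set Implicit Arguments. Unset Strict Implicit. Unset Printing Implicit Defensive.
Import Order.TTheory GRing.Theory Num.Theory.
Local Open Scope ring_scope.

Definition binomB (R : realType) (p : R) (n : nat) (i : int) : R :=
  if (0 <= i) && (i <= n%:Z) then
    ('C(n, `|i|%N))%:R * p ^+ `|i|%N * (1 - p) ^+ (n - `|i|%N)
  else 0.

From mathcomp Require Import all_boot all_order all_algebra.
From mathcomp Require Import all_classical all_reals all_analysis.
From mathcomp Require Import ring lra zify.
Set Implicit Arguments. Unset Strict Implicit. Unset Printing Implicit Defensive.
Import Order.TTheory GRing.Theory Num.Theory.
Local Open Scope classical_set_scope.
Local Open Scope ring_scope.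

(* Each ratio B^{i+1}_n / B^i_n = (n-i)p / ((i+1)(1-p)) is at most exp of itself
   minus one.  Walking b steps down from the mode k = floor(np), the j-th step costs
   at most exp((j+2) / ((1-p)(np-b))), so the whole walk costs
   exp(b(b+3) / (2(1-p)(np-b))) <= exp(b^2 / (p(1-p)n)) as soon as b >= 6 and
   4b <= np.  Upward shifts reduce to downward ones through the symmetry
   B^i_n(p) = B^{n-i}_n(1-p).  The hypotheses on beta make |floor(beta n)| satisfy
   both size conditions for all large n. *)

Section BinomialPmf.
Variable R : realType.

Definition binpmf (p : R) (n i : nat) : R :=
  ('C(n, i))%:R * p ^+ i * (1 - p) ^+ (n - i).

Lemma binomB_nat (p : R) n (i : nat) : binomB p n i%:Z = binpmf p n i.
Proof.
rewrite /binomB /binpmf /=; case: ifP => [//|/negbT].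
by rewrite lez_nat -ltnNge => /bin_small ->; rewrite !mul0r.
Qed.

Lemma binpmf_ge0 (p : R) n i : 0 <= p <= 1 -> 0 <= binpmf p n i.
Proof.
by case/andP=> p0 p1; rewrite !mulr_ge0 ?exprn_ge0 ?subr_ge0.
Qed.

Lemma binpmf_gt0 (p : R) n i : 0 < p < 1 -> (i <= n)%N -> 0 < binpmf p n i.
Proof.
by case/andP=> p0 p1 le_in; rewrite !mulr_gt0 ?exprn_gt0 ?subr_gt0 ?ltr0n ?bin_gt0.
Qed.

Lemma binpmf_sym (p : R) n i : (i <= n)%N -> binpmf p n i = binpmf (1 - p) n (n - i).
Proof.
by move=> le_in; rewrite /binpmf bin_sub // subKn // subKr mulrAC.
Qed.

Lemma binpmfS (p : R) n i : (i < n)%N ->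
  binpmf p n i.+1 * (i.+1%:R * (1 - p)) = binpmf p n i * ((n - i)%:R * p).
Proof.
move=> lt_in.
have binS : i.+1%:R * ('C(n, i.+1))%:R = (n - i)%:R * ('C(n, i))%:R :> R
  by rewrite -!natrM mul_bin_left.
have expS : (1 - p) ^+ (n - i) = (1 - p) ^+ (n - i.+1) * (1 - p).
  by rewrite -(subnSK lt_in) exprSr.
rewrite /binpmf expS exprS.
transitivity (i.+1%:R * ('C(n, i.+1))%:R * (p ^+ i * p * (1 - p) ^+ (n - i.+1) * (1 - p)));
  by [ring | rewrite binS; ring].
Qed.

Lemma binpmfS_le_expR (p : R) n i : 0 < p < 1 -> (i < n)%N ->
  binpmf p n i.+1 <= binpmf p n i * expR ((n - i)%:R * p / (i.+1%:R * (1 - p)) - 1).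
Proof.
move=> /[dup] hp /andP[p0 p1] lt_in.
have den_gt0 : 0 < i.+1%:R * (1 - p) by rewrite mulr_gt0 ?ltr0n ?subr_gt0.
rewrite -[leLHS](mulfK (lt0r_neq0 den_gt0)) binpmfS //.
rewrite -[leLHS]mulrA; apply: ler_wpM2l; first by rewrite binpmf_ge0 // !ltW.
by rewrite -[leLHS](subrK 1) addrC expR_ge1Dx.
Qed.

Lemma binpmf_down_step (p : R) (n k b j : nat) : 0 < p < 1 -> (k <= n)%N ->
  n%:R * p < k%:R + 1 -> (b <= k)%N -> b%:R < n%:R * p -> (j < b)%N ->
  binpmf p n (k - j) <=
    binpmf p n (k - j.+1) * expR ((j%:R + 2) / ((1 - p) * (n%:R * p - b%:R))).
Proof.
move=> hp le_kn near_mode le_bk lt_bnp lt_jb; have /andP[p0 p1] := hp.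
have lt_jk : (j < k)%N := leq_trans lt_jb le_bk.
have lt_in : (k - j.+1 < n)%N by lia.
have := binpmfS_le_expR hp lt_in.
rewrite subnSK // => /le_trans; apply; apply: ler_wpM2l; first by rewrite binpmf_ge0 // !ltW.
have -> : (n - (k - j.+1))%:R = n%:R - k%:R + j%:R + 1 :> R.
  by rewrite subnBA // -addnBAC // natrD natrB // -natr1 addrA.
rewrite ler_expR natrB 1?ltnW //.
have jb : j%:R + 1 <= b%:R :> R by rewrite natr1 ler_nat.
have kj_gt0 : 0 < k%:R - j%:R :> R by rewrite subr_gt0 ltr_nat.
have D_gt0 : 0 < (1 - p) * (n%:R * p - b%:R) by rewrite mulr_gt0 ?subr_gt0.
have -> : (n%:R - k%:R + j%:R + 1) * p / ((k%:R - j%:R) * (1 - p)) - 1 =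
    (n%:R * p + p - (k%:R - j%:R)) / ((k%:R - j%:R) * (1 - p)).
  by field; rewrite !lt0r_neq0 // subr_gt0.
rewrite ler_pdivlMr // mulrAC ler_pdivrMr ?mulr_gt0 // ?subr_gt0 //.
have mode_bound : 0 <= (j%:R + 2 - (n%:R * p + p - (k%:R - j%:R))) * (n%:R * p - b%:R).
  by apply: mulr_ge0; lra.
have gap_bound : 0 <= (j%:R + 2) * (k%:R - j%:R - (n%:R * p - b%:R)).
  by apply: mulr_ge0; have := ler0n R j; lra.
have q0 : 0 <= 1 - p by rewrite subr_ge0 ltW.
have := mulr_ge0 q0 (addr_ge0 mode_bound gap_bound); nra.
Qed.

Lemma binpmf_le_shift_down (p : R) (n k b m : nat) : 0 < p < 1 -> (k <= n)%N ->
  n%:R * p < k%:R + 1 -> (b <= k)%N -> b%:R < n%:R * p -> (m <= b)%N ->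
  binpmf p n k <=
    binpmf p n (k - m) * expR (m%:R * (m%:R + 3) / (2 * ((1 - p) * (n%:R * p - b%:R)))).
Proof.
move=> hp le_kn near_mode le_bk lt_bnp; have /andP[p0 p1] := hp.
elim: m => [_|m IH lt_mb]; first by rewrite subn0 !mul0r expR0 mulr1.
apply: (le_trans (IH (ltnW lt_mb))).
have step := binpmf_down_step hp le_kn near_mode le_bk lt_bnp lt_mb.
apply: le_trans (ler_wpM2r (expR_ge0 _) step) _.
rewrite -[leLHS]mulrA -expRD le_eqVlt; apply/orP; left; apply/eqP; congr (_ * expR _).
by rewrite -natr1; field; rewrite !lt0r_neq0 ?subr_gt0.
Qed.

Lemma shift_exponent_le (p b x : R) : 0 < p < 1 -> 6 <= b -> 4 * b <= x * p ->
  b * (b + 3) / (2 * ((1 - p) * (x * p - b))) <= (p * (1 - p))^-1 * (b ^+ 2 / x).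
Proof.
move=> /andP[p0 p1] b_ge6 le_bxp.
have x_gt0 : 0 < x by rewrite -(pmulr_lgt0 _ p0); lra.
have D_gt0 : 0 < 2 * ((1 - p) * (x * p - b)) by rewrite !mulr_gt0 //; lra.
have -> : (p * (1 - p))^-1 * (b ^+ 2 / x) = b ^+ 2 / ((1 - p) * (x * p)).
  by field; rewrite !lt0r_neq0 ?subr_gt0.
rewrite ler_pdivrMr // mulrAC ler_pdivlMr ?mulr_gt0 ?subr_gt0 //.
have key : 3 * (x * p) + 2 * b ^+ 2 <= b * (x * p).
  have b_big : 0 <= (b - 6) * (x * p) by apply: mulr_ge0; lra.
  have xp_big : 0 <= b * (x * p - 4 * b) by apply: mulr_ge0; lra.
  nra.
have bq_ge0 : 0 <= b * (1 - p) by apply: mulr_ge0; lra.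
have := ler_wpM2l bq_ge0 key; nra.
Qed.

Lemma binpmf_ratio_shift_down (p : R) (n k b : nat) : 0 < p < 1 -> (k <= n)%N ->
  n%:R * p < k%:R + 1 -> (6 <= b)%N -> 4 * b%:R <= n%:R * p ->
  binpmf p n k / binpmf p n (k - b) <= expR ((p * (1 - p))^-1 * (b%:R ^+ 2 / n%:R)).
Proof.
move=> hp le_kn near_mode b_ge6 le_bnp; have /andP[p0 p1] := hp.
have b_ge6R : 6 <= b%:R :> R by rewrite (ler_nat R 6).
have le_bk : (b <= k)%N by rewrite -ltnS -(ltr_nat R) -natr1; lra.
have lt_bnp : b%:R < n%:R * p by lra.
have le_kbn : (k - b <= n)%N by lia.
rewrite ler_pdivrMr ?binpmf_gt0 //.
rewrite mulrC; apply: le_trans (binpmf_le_shift_down hp le_kn near_mode le_bk lt_bnp (leqnn b)) _.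
apply: ler_wpM2l; first by rewrite binpmf_ge0 // !ltW.
by rewrite ler_expR shift_exponent_le.
Qed.

Lemma binpmf_ratio_shift_up (p : R) (n k c : nat) : 0 < p < 1 ->
  k%:R <= n%:R * p -> (6 <= c)%N -> 4 * c%:R <= n%:R * (1 - p) ->
  binpmf p n k / binpmf p n (k + c) <= expR ((p * (1 - p))^-1 * (c%:R ^+ 2 / n%:R)).
Proof.
move=> hp le_knp c_ge6 le_cnq; have /andP[p0 p1] := hp.
have q_bounds : 0 < 1 - p < 1 by apply/andP; split; lra.
have le_cnp : 4 * c%:R <= n%:R - n%:R * p by rewrite mulrBr mulr1 in le_cnq.
have le_kcn : (k + c <= n)%N.
  by rewrite -(ler_nat R) natrD; have := ler0n R c; lra.
have le_kn : (k <= n)%N := leq_trans (leq_addr c k) le_kcn.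
rewrite (binpmf_sym p le_kn) (binpmf_sym p le_kcn) subnDA.
have near_mode : n%:R * (1 - p) < (n - k)%:R + 1 by rewrite natrB // mulrBr mulr1; lra.
have := binpmf_ratio_shift_down q_bounds (leq_subr k n) near_mode c_ge6 le_cnq.
by rewrite subKr [_ * p]mulrC.
Qed.

Lemma floor_natP (x : R) : 0 <= x ->
  exists k : nat, [/\ Num.floor x = k%:Z, k%:R <= x & x < k%:R + 1].
Proof.
move=> x_ge0; have := floorD1_gt x; have := floor_le x.
have : Num.floor x = (`|Num.floor x|%N)%:Z by rewrite gez0_abs // floor_ge0.
move: (`|_|%N) => k ->; rewrite intrD => k_le k_gt.
by exists k.
Qed.

Lemma floor_negP (x : R) : x < 0 ->
  exists c : nat, [/\ Num.floor x = - c%:Z, - c%:R <= x & x < 1 - c%:R].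
Proof.
move=> x_lt0; have := floorD1_gt x; have := floor_le x.
have : Num.floor x = - (`|Num.floor x|%N)%:Z by rewrite ltz0_abs ?opprK ?floor_lt0.
move: (`|_|%N) => c ->; rewrite intrD intrN addrC => c_le c_gt.
by exists c.
Qed.

Lemma binomB_floor_ratio_le (p x : R) (n : nat) : 0 < p < 1 -> 7 <= `|x| ->
  4 * (`|x| + 1) <= n%:R * p -> 4 * (`|x| + 1) <= n%:R * (1 - p) ->
  binomB p n (Num.floor (n%:R * p)) / binomB p n (Num.floor (n%:R * p) - Num.floor x)
    <= expR ((p * (1 - p))^-1 * ((Num.floor x)%:~R ^+ 2 / n%:R)).
Proof.
move=> hp x_ge7 x_p x_q; have /andP[p0 p1] := hp.
have [k [-> k_le k_gt]] := floor_natP (mulr_ge0 (ler0n R n) (ltW p0)).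
have k_le_n : (k <= n)%N.
  by rewrite -(ler_nat R); apply: le_trans k_le (ler_piMr (ler0n R n) (ltW p1)).
have [x_ge0 | x_lt0] := lerP 0 x.
- have [b [-> b_le b_gt]] := floor_natP x_ge0.
  rewrite ger0_norm // in x_ge7 x_p.
  have b_ge6 : (6 <= b)%N by rewrite -(ler_nat R); lra.
  have b_le_k : (b <= k)%N by rewrite -ltnS -(ltr_nat R) -natr1; lra.
  rewrite subzn // !binomB_nat.
  by apply: binpmf_ratio_shift_down => //; lra.
- have [c [-> c_le c_gt]] := floor_negP x_lt0.
  rewrite ltr0_norm // in x_ge7 x_q.
  have c_ge6 : (6 <= c)%N by rewrite -(ler_nat R); lra.
  rewrite opprK -PoszD !binomB_nat intrN sqrrN.
  by apply: binpmf_ratio_shift_up => //; lra.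
Qed.

End BinomialPmf.

Lemma eventually_sqrt_le_linear (R : realType) (C a : R) : 0 < a ->
  \forall n \near \oo, C * Num.sqrt n%:R + 1 <= n%:R * a.
Proof.
move=> a_gt0; set t := (`|C| + 1) / a.
have t_ge0 : 0 <= t by rewrite divr_ge0 ?ltW // addr_ge0.
apply: filterS (nbhs_infty_ger (t ^+ 2 + 1)) => n le_n.
have n_ge0 : 0 <= n%:R :> R := ler0n R n.
set s := Num.sqrt n%:R; have s_ge0 : 0 <= s := sqrtr_ge0 _.
have s1 : 1 <= s by rewrite -sqrtr1 ler_sqrt //; have := sqr_ge0 t; lra.
have st : t <= s by rewrite -(ger0_norm t_ge0) -sqrtr_sqr ler_sqrt // ?sqr_ge0; lra.
have as_ge : `|C| + 1 <= s * a by move: st; rewrite ler_pdivrMr.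
rewrite -(sqr_sqrtr n_ge0) -/s.
have := ler_wpM2r s_ge0 as_ge; have := ler_norm C; nra.
Qed.

Theorem lemma3 (R : realType) (p : R) (beta : nat -> R) :
  0 < p < 1 ->
  (exists2 C : R, 0 < C &
     \forall n \near \oo, `|beta n| <= C * Num.sqrt (n%:R)) ->
  ((fun n => `|beta n|) @ \oo --> +oo) ->
  \forall n \near \oo,
    binomB p n (Num.floor (n%:R * p))
      / binomB p n (Num.floor (n%:R * p) - Num.floor (beta n))
    <= expR ((p * (1 - p))^-1 * ((Num.floor (beta n))%:~R ^+ 2 / n%:R)).
Proof.
move=> hp [C _ beta_sqrt] /cvgryPge beta_big; have /andP[p0 p1] := hp.
have q0 : 0 < 1 - p by rewrite subr_gt0.
have small_p := eventually_sqrt_le_linear C (divr_gt0 p0 (ltr0n R 4)).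
have small_q := eventually_sqrt_le_linear C (divr_gt0 q0 (ltr0n R 4)).
near=> n; apply: binomB_floor_ratio_le => //.
- by near: n; exact: beta_big.
- by near: n; apply: filterS2 beta_sqrt small_p => n; lra.
- by near: n; apply: filterS2 beta_sqrt small_q => n; lra.
Unshelve. all: end_near.
Qed.
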